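(* Let $\Omega$ be a finite set with $|\Omega|\ge2$ and $0<\varepsilon<1/2$. There is $n_0=n_0(\varepsilon,\Omega)$ such that the following holds for all $n>n_0$. Let $\mu\in\mathcal P(\Omega^n)$ and let $S_1,\dots,S_l\subset\Omega^n$ be pairwise disjoint sets such that (i) $\sum_{i=1}^l\mu(S_i)>1-\varepsilon$, and (ii) $\mu(S_i)>0$ and the conditional distribution $\mu[\cdot|S_i]$ is $(\varepsilon/9)^3$-symmetric for each $1\le i\le l$. Let $z=\sum_{h=1}^l\mu(S_h)$. Then $D_\square\Big(\mu,\ \frac1z\sum_{i=1}^l\mu(S_i)\bigotimes_{j=1}^n\mu_j[\cdot|S_i]\Big)<2\varepsilon$.
   Context: $\mathcal P(\mathcal X)$ denotes the set of probability measures on a finite set $\mathcal X$; $[n]=\{1,\dots,n\}$; $\|p-q\|_{TV}=\frac12\sum_x|p(x)-q(x)|$. For $\mu\in\mathcal P(\Omega^n)$, $\mu_j$ and $\mu_{i,j}$ denote the marginals on coordinate $j$ and coordinates $\{i,j\}$; $\mu_j[\cdot|S]$ is the $j$-th marginal of the conditional measure $\mu[\cdot|S]$. $\mu\in\mathcal P(\Omega^V)$ is $\varepsilon$-symmetric if $\frac1{|V|^2}\sum_{i,j\in V,\,i\ne j}\|\mu_{i,j}-\mu_i\otimes\mu_j\|_{TV}<\varepsilon$. For $\mu,\nu\in\mathcal P(\Omega^n)$ let $\Gamma(\mu,\nu)$ be the set of couplings, i.e. probability measures $\gamma$ on $\Omega^n\times\Omega^n$ whose first and second marginals are $\mu$ and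 $\nu$. The cut metric is $D_\square(\mu,\nu)=\frac1n\min_{\gamma\in\Gamma(\mu,\nu)}\max_{I\subset[n],\,B\subset\Omega^n\times\Omega^n,\,\omega\in\Omega}\Big|\sum_{i\in I}\sum_{(\sigma,\tau)\in B}\gamma(\sigma,\tau)\big(\mathbf 1\{\sigma_i=\omega\}-\mathbf 1\{\tau_i=\omega\}\big)\Big|$. *)

From HB Require Import structures.
From mathcomp Require Import all_boot all_order all_algebra.
Set Implicit Arguments. Unset Strict Implicit. Unset Printing Implicit Defensive.
Import Order.TTheory GRing.Theory Num.Theory.
Local Open Scope ring_scope.

Section Defs.
Variable R : realFieldType.

Definition config (Omega : finType) (n : nat) := {ffun 'I_n -> Omega}.

Definition is_prob (T : finType) (p : T -> R) : Prop :=
  (forall x, 0 <= p x) /\ \sum_(x : T) p x = 1.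

Definition mass (T : finType) (p : T -> R) (S : {set T}) : R :=
  \sum_(x in S) p x.

Definition cond (T : finType) (p : T -> R) (S : {set T}) : T -> R :=
  fun x => if x \in S then p x / mass p S else 0.

Definition tv (T : finType) (p q : T -> R) : R :=
  2^-1 * \sum_(x : T) `|p x - q x|.

Definition marg1 (Omega : finType) n (p : config Omega n -> R) (j : 'I_n)
  : Omega -> R :=
  fun w => \sum_(s : config Omega n | s j == w) p s.

Definition marg2 (Omega : finType) n (p : config Omega n -> R) (i j : 'I_n)
  : Omega * Omega -> R :=
  fun w => \sum_(s : config Omega n | (s i, s j) == w) p s.

Definition prod2 (Omega : finType) (p q : Omega -> R) : Omega * Omega -> R :=
  fun w => p w.1 * q w.2.

Definition eps_symmetric (Omega : finType) n (p : config Omega n -> R) (eps : R)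
  : Prop :=
  (n%:R ^+ 2)^-1 * \sum_(i : 'I_n) \sum_(j : 'I_n | i != j)
      tv (marg2 p i j) (prod2 (marg1 p i) (marg1 p j)) < eps.

Definition is_coupling (T : finType) (mu nu : T -> R) (g : T * T -> R) : Prop :=
  (forall x, 0 <= g x) /\
  (forall s, \sum_(t : T) g (s, t) = mu s) /\
  (forall t, \sum_(s : T) g (s, t) = nu t).

Definition cut_term (Omega : finType) n (g : config Omega n * config Omega n -> R)
  (I : {set 'I_n}) (B : {set config Omega n * config Omega n}) (w : Omega) : R :=
  `| \sum_(i in I) \sum_(st in B)
        g st * ((st.1 i == w)%:R - (st.2 i == w)%:R) |.

Definition cut_value (Omega : finType) n (g : config Omega n * config Omega n -> R)
  : R :=
  \big[Num.max/0]_(I : {set 'I_n})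
   \big[Num.max/0]_(B : {set config Omega n * config Omega n})
   \big[Num.max/0]_(w : Omega) cut_term g I B w.

(* D_square is (1/n) times a minimum over the compact
   set of couplings of a continuous function; the minimum is attained, so
   "D_square(mu,nu) < c" means exactly: some coupling gamma has value < c. *)
Definition cut_dist_lt (Omega : finType) n (mu nu : config Omega n -> R) (c : R)
  : Prop :=
  exists g, is_coupling mu nu g /\ n%:R^-1 * cut_value g < c.

Definition prod_meas (Omega : finType) n (q : 'I_n -> Omega -> R)
  : config Omega n -> R :=
  fun s => \prod_(j : 'I_n) q j (s j).

End Defs.

From HB Require Import structures.
From mathcomp Require Import all_boot all_order all_algebra.
From mathcomp Require Import ring lra.
Import Order.TTheory GRing.Theory Num.Theory.
Set Implicit Arguments. Unset Strict Implicit.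
Local Open Scope ring_scope.

(* Couple mu with the mixture piecewise: with weight mu(S_i) draw a pair
   independently from mu[.|S_i] and from the product nu_i of its marginals,
   and spread the remaining mass 1 - z independently against the mixture.
   Each cut term is then at most the expectation of |D| for
   D = sum_(a in I) (1{x_a = w} - 1{y_a = w}).  Under p x nu, with nu the
   product of the marginals of p, the diagonal terms of E[D^2] are at most 1
   and the term (a, b), a != b, is at most twice the total variation distance
   between p_(a,b) and p_a x p_b, so eps-symmetry gives
   E[D^2] <= n + 2 (eps/9)^3 n^2.  From |D| <= D^2/c + c/4 with c = n eps,
   each piece contributes at most n (1/(n eps) + eps/4 + 2 eps^2/729), which
   is below n eps once n > 4/eps^2, and the remaining mass at most
   n (1 - z) < n eps. *)

Lemma ler_sum_subpred (R : numDomainType) (I : finType) (P Q : pred I)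
    (F : I -> R) :
  (forall i, P i -> Q i) -> (forall i, 0 <= F i) ->
  \sum_(i | P i) F i <= \sum_(i | Q i) F i.
Proof.
move=> PQ F_ge0; rewrite [leLHS]big_mkcond [leRHS]big_mkcond.
apply: ler_sum => i _; case: (boolP (P i)) => [/PQ -> //|_].
by case: (Q i).
Qed.

Lemma tv_ge0 (R : realFieldType) (T : finType) (p q : T -> R) : 0 <= tv p q.
Proof. by apply: mulr_ge0; [rewrite invr_ge0 | apply: sumr_ge0]. Qed.

Lemma sum_mul_eq1 (R : pzSemiRingType) (T : finType) (F : T -> R) (w : T) :
  \sum_(x : T) F x * (x == w)%:R = F w.
Proof.
rewrite (bigD1 w) //= eqxx mulr1 big1 ?addr0 // => x /negbTE ->.
by rewrite mulr0.
Qed.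

Lemma sum_indep_mul_diff (R : comPzRingType) (T : finType) (p nu f g : T -> R) :
  \sum_(x : T) p x = 1 -> \sum_(y : T) nu y = 1 ->
  \sum_(x : T) \sum_(y : T) p x * nu y * ((f x - f y) * (g x - g y)) =
  \sum_(x : T) p x * (f x * g x) + \sum_(y : T) nu y * (f y * g y)
  - (\sum_(x : T) p x * f x) * (\sum_(y : T) nu y * g y)
  - (\sum_(y : T) nu y * f y) * (\sum_(x : T) p x * g x).
Proof.
move=> p1 nu1.
transitivity (\sum_(x : T) (p x * (f x * g x)
    + p x * (\sum_(y : T) nu y * (f y * g y))
    - p x * f x * (\sum_(y : T) nu y * g y)
    - p x * g x * (\sum_(y : T) nu y * f y))).
  apply: eq_bigr => x _.
  transitivity (\sum_(y : T) (p x * (f x * g x) * nu y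
      + p x * (nu y * (f y * g y)) - p x * f x * (nu y * g y)
      - p x * g x * (nu y * f y))).
    by apply: eq_bigr => y _; ring.
  by rewrite !sumrB big_split /= -!mulr_sumr nu1 mulr1.
rewrite !sumrB big_split /= -!mulr_suml p1 mul1r.
ring.
Qed.

Section Indicators.
Variables (R : realFieldType) (Omega : finType) (n : nat).
Local Notation T := (config Omega n).

Definition ind (w : Omega) (a : 'I_n) (s : T) : R := (s a == w)%:R.

Lemma ind_ge0 w a s : 0 <= ind w a s.
Proof. exact: ler0n. Qed.

Lemma ind_le1 w a s : ind w a s <= 1.
Proof. by rewrite /ind; case: (s a == w). Qed.

Lemma sum_marg1 (p : T -> R) j :
  \sum_(x : Omega) marg1 p j x = \sum_(s : T) p s.
Proof. by rewrite (partition_big (fun s : T => s j) predT). Qed.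

Lemma sum_mul_ind (p : T -> R) w a :
  \sum_(s : T) p s * ind w a s = marg1 p a w.
Proof.
rewrite /marg1 [RHS]big_mkcond; apply: eq_bigr => s _.
by rewrite /ind; case: (s a == w); rewrite ?mulr1 ?mulr0.
Qed.

Lemma sum_mul_ind2 (p : T -> R) w a b :
  \sum_(s : T) p s * (ind w a s * ind w b s) = marg2 p a b (w, w).
Proof.
rewrite /marg2 [RHS]big_mkcond; apply: eq_bigr => s _.
rewrite /ind xpair_eqE.
by case: (s a == w); case: (s b == w); rewrite ?mulr1 ?mulr0.
Qed.

Section ProductMeasure.
Variable q : 'I_n -> Omega -> R.

Lemma sum_prod_meas_mul_prod (h : 'I_n -> Omega -> R) :
  \sum_(s : T) prod_meas q s * \prod_(j : 'I_n) h j (s j) =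
  \prod_(j : 'I_n) \sum_(x : Omega) q j x * h j x.
Proof.
rewrite bigA_distr_bigA; apply: eq_bigr => s _.
by rewrite /prod_meas -big_split.
Qed.

Hypothesis q_sum1 : forall j, \sum_(x : Omega) q j x = 1.

Lemma sum_prod_meas_mul_inds (J : {set 'I_n}) w :
  \sum_(s : T) prod_meas q s * \prod_(j in J) ind w j s =
  \prod_(j in J) q j w.
Proof.
pose h j (x : Omega) : R := if j \in J then (x == w)%:R else 1.
rewrite (eq_bigr (fun s => prod_meas q s * \prod_j h j (s j))); last first.
  by move=> s _; rewrite big_mkcond.
rewrite sum_prod_meas_mul_prod [RHS]big_mkcond; apply: eq_bigr => j _.
rewrite /h; case: (j \in J); first exact: sum_mul_eq1.
by under eq_bigr do rewrite mulr1.
Qed.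

Lemma sum_prod_meas : \sum_(s : T) prod_meas q s = 1.
Proof.
have := sum_prod_meas_mul_prod (fun _ _ => 1).
under eq_bigr do rewrite big1 // mulr1.
move=> ->; apply: big1 => j _.
by under eq_bigr do rewrite mulr1.
Qed.

Lemma sum_prod_meas_mul_ind w a :
  \sum_(s : T) prod_meas q s * ind w a s = q a w.
Proof.
have := sum_prod_meas_mul_inds [set a] w.
by rewrite big_set1; under eq_bigr do rewrite big_set1.
Qed.

Lemma sum_prod_meas_mul_ind2 w a b : a != b ->
  \sum_(s : T) prod_meas q s * (ind w a s * ind w b s) = q a w * q b w.
Proof.
move=> ab; have aNb : a \notin [set b] by rewrite in_set1.
have := sum_prod_meas_mul_inds [set a; b] w.
rewrite big_setU1 //= big_set1.
by under eq_bigr do rewrite big_setU1 //= big_set1.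
Qed.

End ProductMeasure.

Definition sym_defect (p : T -> R) : R :=
  \sum_(a : 'I_n) \sum_(b : 'I_n | a != b)
    tv (marg2 p a b) (prod2 (marg1 p a) (marg1 p b)).

Definition cut_dev (w : Omega) (I : {set 'I_n}) (x y : T) : R :=
  \sum_(a in I) (ind w a x - ind w a y).

Lemma norm_cut_dev_le w I x y : `|cut_dev w I x y| <= n%:R.
Proof.
apply: le_trans (ler_norm_sum _ _ _) _.
apply: (@le_trans _ _ (\sum_(a in I) 1)).
  apply: ler_sum => a _; rewrite ler_norml.
  by have := ind_ge0 w a x; have := ind_le1 w a x; have := ind_ge0 w a y;
     have := ind_le1 w a y; rewrite -!lerBlDr; lra.
have -> : n%:R = \sum_(a : 'I_n) (1 : R) by rewrite sumr_const card_ord.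
exact: ler_sum_subpred.
Qed.

Lemma cut_term_le (g : T * T -> R) I B w : (forall st, 0 <= g st) ->
  cut_term g I B w <= \sum_(st : T * T) g st * `|cut_dev w I st.1 st.2|.
Proof.
move=> g_ge0; rewrite /cut_term exchange_big /=.
under eq_bigr do rewrite -mulr_sumr.
apply: le_trans (ler_norm_sum _ _ _) _.
rewrite (eq_bigr (fun st => g st * `|cut_dev w I st.1 st.2|)); last first.
  by move=> st _; rewrite normrM ger0_norm.
by apply: ler_sum_subpred => // st; apply: mulr_ge0.
Qed.

Section Moments.
Variable p : T -> R.
Hypothesis p_ge0 : forall s, 0 <= p s.
Hypothesis p_sum1 : \sum_(s : T) p s = 1.
Local Notation nu := (prod_meas (fun j => marg1 p j)).

Lemma sum_marg1_eq1 j : \sum_(x : Omega) marg1 p j x = 1.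
Proof. by rewrite sum_marg1. Qed.

Lemma prod_marg1_ge0 s : 0 <= nu s.
Proof. by apply: prodr_ge0 => j _; apply: sumr_ge0. Qed.

Lemma sum_prod_marg1 : \sum_(s : T) nu s = 1.
Proof. exact: sum_prod_meas sum_marg1_eq1. Qed.

Lemma indep_moment_ind2 w a b : a != b ->
  \sum_(x : T) \sum_(y : T) p x * nu y *
     ((ind w a x - ind w a y) * (ind w b x - ind w b y))
  = marg2 p a b (w, w) - marg1 p a w * marg1 p b w.
Proof.
move=> ab; rewrite sum_indep_mul_diff // ?sum_prod_marg1 //.
rewrite (sum_prod_meas_mul_ind2 sum_marg1_eq1) //.
rewrite !(sum_prod_meas_mul_ind sum_marg1_eq1) sum_mul_ind2 !sum_mul_ind.
ring.
Qed.

Lemma indep_moment_ind2_le_tv w a b : a != b ->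
  \sum_(x : T) \sum_(y : T) p x * nu y *
     ((ind w a x - ind w a y) * (ind w b x - ind w b y))
  <= 2 * tv (marg2 p a b) (prod2 (marg1 p a) (marg1 p b)).
Proof.
move=> ab; rewrite indep_moment_ind2 // /tv mulrA divff ?mul1r ?pnatr_eq0 //.
rewrite (bigD1 (w, w)) //= -[leLHS]addr0.
by apply: lerD; [rewrite /prod2 ler_norm | apply: sumr_ge0].
Qed.

Lemma indep_moment_ind_le1 w a :
  \sum_(x : T) \sum_(y : T) p x * nu y *
     ((ind w a x - ind w a y) * (ind w a x - ind w a y)) <= 1.
Proof.
apply: (@le_trans _ _ (\sum_(x : T) \sum_(y : T) p x * nu y)).
  apply: ler_sum => x _; apply: ler_sum => y _.
  rewrite -[leRHS]mulr1; apply: ler_wpM2l; first exact/mulr_ge0/prod_marg1_ge0.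
  have := ind_ge0 w a x; have := ind_le1 w a x; have := ind_ge0 w a y;
  have := ind_le1 w a y; nra.
by under eq_bigr do rewrite -mulr_sumr sum_prod_marg1 mulr1; rewrite p_sum1.
Qed.

Lemma indep_moment_cut_dev2 w I :
  \sum_(x : T) \sum_(y : T) p x * nu y * cut_dev w I x y ^+ 2
  <= n%:R + 2 * sym_defect p.
Proof.
pose M a b := \sum_(x : T) \sum_(y : T) p x * nu y *
  ((ind w a x - ind w a y) * (ind w b x - ind w b y)).
pose tv2 a b := 2 * tv (marg2 p a b) (prod2 (marg1 p a) (marg1 p b)).
have tv2_ge0 a b : 0 <= tv2 a b by apply: mulr_ge0; rewrite ?tv_ge0.
have -> : \sum_(x : T) \sum_(y : T) p x * nu y * cut_dev w I x y ^+ 2 =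
    \sum_(a in I) \sum_(b in I) M a b.
  under eq_bigr => x _ do under eq_bigr => y _ do
    rewrite /cut_dev expr2 big_distrlr mulr_sumr.
  under eq_bigr => x _ do under eq_bigr => y _ do
    under eq_bigr => a _ do rewrite mulr_sumr.
  under eq_bigr => x _ do rewrite exchange_big.
  rewrite exchange_big; apply: eq_bigr => a _.
  under eq_bigr => x _ do rewrite exchange_big.
  by rewrite exchange_big.
apply: (@le_trans _ _ (\sum_(a in I) (1 + \sum_(b | a != b) tv2 a b))).
  apply: ler_sum => a aI; rewrite (bigD1 a) //=.
  apply: lerD; first exact: indep_moment_ind_le1.
  apply: (@le_trans _ _ (\sum_(b in I | b != a) tv2 a b)).
    by apply: ler_sum => b /andP[_ ba]; apply: indep_moment_ind2_le_tv;
       rewrite eq_sym.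
  by apply: ler_sum_subpred => // b /andP[_]; rewrite eq_sym.
apply: (@le_trans _ _ (\sum_a (1 + \sum_(b | a != b) tv2 a b))).
  by apply: ler_sum_subpred => // a; apply: addr_ge0 => //; apply: sumr_ge0.
rewrite big_split /= sumr_const card_ord /sym_defect mulr_sumr.
by under [in leRHS]eq_bigr do rewrite mulr_sumr.
Qed.

Lemma indep_moment_norm_cut_dev (c d : R) w I :
  0 < c -> sym_defect p <= d ->
  \sum_(x : T) \sum_(y : T) p x * nu y * `|cut_dev w I x y|
  <= (n%:R + 2 * d) / c + c / 4.
Proof.
move=> c_gt0 hd.
have amgm (t : R) : `|t| <= t ^+ 2 / c + c / 4.
  rewrite -real_normK ?num_real // -subr_ge0.
  have -> : `|t| ^+ 2 / c + c / 4 - `|t| = (`|t| - c / 2) ^+ 2 / c.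
    by field; rewrite gt_eqF.
  exact/divr_ge0/ltW/c_gt0/sqr_ge0.
apply: (@le_trans _ _ (\sum_(x : T) \sum_(y : T)
   (p x * nu y * cut_dev w I x y ^+ 2 / c + c / 4 * (p x * nu y)))).
  apply: ler_sum => x _; apply: ler_sum => y _.
  rewrite mulrC [leRHS](_ : _ = p x * nu y * (cut_dev w I x y ^+ 2 / c + c / 4));
    last by ring.
  by rewrite mulrC; apply/ler_wpM2l/amgm/mulr_ge0/prod_marg1_ge0.
under eq_bigr do rewrite big_split /= -mulr_suml -mulr_sumr -mulr_sumr
  sum_prod_marg1 mulr1.
rewrite big_split /= -mulr_suml -mulr_sumr p_sum1 mulr1.
apply: lerD => //; apply: ler_wpM2r; first by rewrite invr_ge0 ltW.
apply: le_trans (indep_moment_cut_dev2 w I) _.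
by rewrite lerD2l ler_wpM2l.
Qed.

End Moments.

End Indicators.
Arguments cut_dev {R Omega n}.

Section Conditioning.
Variables (R : realFieldType) (T : finType) (p : T -> R) (S : {set T}).
Hypothesis p_ge0 : forall s, 0 <= p s.
Hypothesis mass_gt0 : 0 < mass p S.

Lemma cond_ge0 x : 0 <= cond p S x.
Proof. by rewrite /cond; case: (x \in S) => //; apply/divr_ge0/ltW. Qed.

Lemma sum_cond : \sum_(x : T) cond p S x = 1.
Proof. by rewrite /cond -big_mkcond /= -mulr_suml divff ?gt_eqF. Qed.

Lemma mass_mul_cond x : mass p S * cond p S x = if x \in S then p x else 0.
Proof.
rewrite /cond; case: (x \in S); last by rewrite mulr0.
by rewrite mulrC -mulrA mulVf ?mulr1 ?gt_eqF.
Qed.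

End Conditioning.

Section Mixture.
Variables (R : realFieldType) (Omega : finType) (n : nat).
Local Notation T := (config Omega n).
Variable mu : T -> R.
Hypothesis mu_ge0 : forall s, 0 <= mu s.
Hypothesis mu_sum1 : \sum_(s : T) mu s = 1.
Variables (l : nat) (S : 'I_l -> {set T}).
Hypothesis S_disj : forall i j, i != j -> [disjoint S i & S j].
Hypothesis S_gt0 : forall i, 0 < mass mu (S i).

Local Notation wt i := (mass mu (S i)).
Local Notation mu_ i := (cond mu (S i)).
Local Notation nu_ i := (prod_meas (fun j => marg1 (cond mu (S i)) j)).
Local Notation z := (\sum_(h < l) mass mu (S h)).
Hypothesis z_gt0 : 0 < z.

Let sum_piece i : \sum_(s : T) mu_ i s = 1 := sum_cond (S_gt0 i).
Let sum_prod_piece i : \sum_(s : T) nu_ i s = 1 := sum_prod_marg1 (sum_piece i).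
Let piece_ge0 i s : 0 <= mu_ i s := cond_ge0 mu_ge0 (S_gt0 i) s.
Let prod_piece_ge0 i s : 0 <= nu_ i s := prod_marg1_ge0 (piece_ge0 i) s.

Definition mixture (s : T) : R := z^-1 * \sum_(i < l) wt i * nu_ i s.

Definition residual (x : T) : R := mu x - \sum_(i < l) wt i * mu_ i x.

Definition mixture_coupling (st : T * T) : R :=
  \sum_(i < l) wt i * mu_ i st.1 * nu_ i st.2 + residual st.1 * mixture st.2.

Lemma residual_ge0 x : 0 <= residual x.
Proof.
rewrite /residual subr_ge0.
under eq_bigr => i _ do rewrite (mass_mul_cond (S_gt0 i)).
case: (pickP (fun i => x \in S i)) => [i xSi | xNS]; last first.
  by rewrite big1 // => i _; rewrite xNS.
rewrite (bigD1 i) //= xSi big1 ?addr0 // => j ji.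
by rewrite (disjointFl (S_disj ji) xSi).
Qed.

Lemma sum_residual : \sum_(x : T) residual x = 1 - z.
Proof.
rewrite sumrB mu_sum1 exchange_big /=; congr (_ - _).
by apply: eq_bigr => i _; rewrite -mulr_sumr sum_piece mulr1.
Qed.

Lemma mixture_ge0 y : 0 <= mixture y.
Proof.
apply: mulr_ge0; first by rewrite invr_ge0 ltW.
by apply: sumr_ge0 => i _; apply: mulr_ge0; [exact: ltW | exact: prod_piece_ge0].
Qed.

Lemma sum_mixture : \sum_(y : T) mixture y = 1.
Proof.
rewrite -mulr_sumr exchange_big /=.
under [X in _ * X]eq_bigr do rewrite -mulr_sumr sum_prod_piece mulr1.
by rewrite mulVf ?gt_eqF.
Qed.

Lemma is_coupling_mixture : is_coupling mu mixture mixture_coupling.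
Proof.
split; [|split].
- move=> [x y]; apply: addr_ge0; last exact/mulr_ge0/mixture_ge0/residual_ge0.
  apply: sumr_ge0 => i _; apply/mulr_ge0/prod_piece_ge0.
  exact/mulr_ge0/piece_ge0/ltW.
- move=> x; rewrite big_split /= -mulr_sumr sum_mixture mulr1 exchange_big /=.
  under eq_bigr do rewrite -mulr_sumr sum_prod_piece mulr1.
  by rewrite /residual addrC subrK.
- move=> y; rewrite big_split /= -mulr_suml sum_residual exchange_big /=.
  under eq_bigr do rewrite -mulr_suml -mulr_sumr sum_piece mulr1.
  have -> : \sum_(i < l) wt i * nu_ i y = z * mixture y.
    by rewrite /mixture mulrA mulfV ?mul1r ?lt0r_neq0.
  ring.
Qed.

Lemma sum_mixture_coupling (F : T -> T -> R) :
  \sum_(st : T * T) mixture_coupling st * F st.1 st.2 =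
  \sum_(i < l) wt i * (\sum_(x : T) \sum_(y : T) mu_ i x * nu_ i y * F x y)
  + \sum_(x : T) \sum_(y : T) residual x * mixture y * F x y.
Proof.
rewrite -(pair_bigA _ (fun x y => mixture_coupling (x, y) * F x y)).
under [in RHS]eq_bigr => i _ do rewrite mulr_sumr.
under [in RHS]eq_bigr => i _ do under eq_bigr => x _ do rewrite mulr_sumr.
rewrite [in RHS]exchange_big -big_split; apply: eq_bigr => x _ /=.
rewrite exchange_big -big_split; apply: eq_bigr => y _ /=.
by rewrite mulrDl mulr_suml; congr (_ + _); apply: eq_bigr => i _; ring.
Qed.

Lemma mixture_coupling_norm_cut_dev_le (c d : R) v I :
  0 < c -> (forall i, sym_defect (mu_ i) <= d) ->
  \sum_(st : T * T) mixture_coupling st * `|cut_dev v I st.1 st.2| <=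
    z * ((n%:R + 2 * d) / c + c / 4) + n%:R * (1 - z).
Proof.
move=> c_gt0 hd; rewrite (sum_mixture_coupling (fun x y => `|cut_dev v I x y|)).
apply: lerD.
  rewrite mulr_suml; apply: ler_sum => i _; apply: ler_wpM2l; first exact: ltW.
  exact: indep_moment_norm_cut_dev (piece_ge0 i) (sum_piece i) _ _ _ _ c_gt0 (hd i).
apply: (@le_trans _ _ (\sum_(x : T) \sum_(y : T) residual x * mixture y * n%:R)).
  apply: ler_sum => x _; apply: ler_sum => y _; apply: ler_wpM2l.
    exact/mulr_ge0/mixture_ge0/residual_ge0.
  exact: norm_cut_dev_le.
under eq_bigr do rewrite -mulr_suml -mulr_sumr sum_mixture mulr1.
by rewrite -mulr_suml sum_residual mulrC.
Qed.

Lemma cut_value_mixture_coupling_le (c d : R) :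
  0 < c -> 0 <= d -> (forall i, sym_defect (mu_ i) <= d) ->
  cut_value mixture_coupling <=
    z * ((n%:R + 2 * d) / c + c / 4) + n%:R * (1 - z).
Proof.
move=> c_gt0 d_ge0 hd.
have z_le1 : 0 <= 1 - z.
  by rewrite -sum_residual; apply: sumr_ge0 => x _; apply: residual_ge0.
have c_ge0 := ltW c_gt0.
have piece_bound_ge0 : 0 <= (n%:R + 2 * d) / c + c / 4.
  by rewrite addr_ge0 ?divr_ge0 ?addr_ge0 ?mulr_ge0.
have bound_ge0 : 0 <= z * ((n%:R + 2 * d) / c + c / 4) + n%:R * (1 - z).
  by apply: addr_ge0; apply: mulr_ge0 => //; apply: ltW.
apply: bigmax_le => // I _; apply: bigmax_le => // B _; apply: bigmax_le => // v _.
apply: le_trans (cut_term_le _ _ _ is_coupling_mixture.1) _.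
exact: mixture_coupling_norm_cut_dev_le.
Qed.

End Mixture.

Lemma cut_estimate_lt (R : realFieldType) (N eps z : R) :
  0 < N -> 4 < N * eps ^+ 2 -> 0 < eps -> eps < 2^-1 -> 1 - eps < z ->
  N^-1 * (z * ((N + 2 * ((eps / 9) ^+ 3 * N ^+ 2)) / (N * eps) + N * eps / 4)
          + N * (1 - z)) < 2 * eps.
Proof.
move=> N_gt0 N_large eps_gt0 eps_lt z_gt.
have N_neq0 : N != 0 by rewrite gt_eqF.
have eps_neq0 : eps != 0 by rewrite gt_eqF.
set x := (N * eps)^-1.
have -> : N^-1 * (z * ((N + 2 * ((eps / 9) ^+ 3 * N ^+ 2)) / (N * eps)
                      + N * eps / 4) + N * (1 - z))
    = z * (x + 2 * eps ^+ 2 / 729 + eps / 4) + (1 - z).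
  by rewrite /x; field; rewrite N_neq0 eps_neq0.
have x_gt0 : 0 < x by rewrite invr_gt0 mulr_gt0.
have x_lt : x < eps / 4.
  have xNeps2 : x * (N * eps ^+ 2) = eps by rewrite /x; field; rewrite N_neq0 eps_neq0.
  have : 0 < x * (N * eps ^+ 2 - 4) by apply: mulr_gt0; lra.
  by rewrite mulrBr xNeps2; lra.
have eps2_le : eps ^+ 2 <= eps by rewrite expr2; nra.
set A := x + _ + _.
have A_lt : A < eps by rewrite /A; lra.
have : 0 < (z - (1 - eps)) * (1 - A) by apply: mulr_gt0; lra.
nra.
Qed.

Theorem proposition2p6 (R : archiRcfType) (Omega : finType)
  (hOmega : (1 < #|Omega|)%N) (eps : R) (heps0 : 0 < eps) (heps1 : eps < 2^-1) :
  exists n0 : nat, forall n : nat, (n0 < n)%N ->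
  forall (mu : config Omega n -> R), is_prob mu ->
  forall (l : nat) (S : 'I_l -> {set config Omega n}),
    (forall i j, i != j -> [disjoint S i & S j]) ->
    1 - eps < \sum_(i < l) mass mu (S i) ->
    (forall i, 0 < mass mu (S i) /\
               eps_symmetric (cond mu (S i)) ((eps / 9) ^+ 3)) ->
    let z := \sum_(h < l) mass mu (S h) in
    cut_dist_lt mu
      (fun s => z^-1 * \sum_(i < l)
                  mass mu (S i) * prod_meas (fun j => marg1 (cond mu (S i)) j) s)
      (2 * eps).
Proof.
have bound_ge0 : 0 <= 4 / eps ^+ 2 by rewrite divr_ge0 ?sqr_ge0.
exists (Num.bound (4 / eps ^+ 2)) => n n_large mu [mu_ge0 mu_sum1] l S S_disj
  z_gt S_sym z.
have S_gt0 i : 0 < mass mu (S i) by case: (S_sym i).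
have z_gt0 : 0 < z by rewrite /z; lra.
set N : R := n%:R.
have N_gt : 4 / eps ^+ 2 < N.
  by apply: lt_trans (archi_boundP bound_ge0) _; rewrite ltr_nat.
have N_gt0 : 0 < N by apply: le_lt_trans N_gt.
have N_large : 4 < N * eps ^+ 2 by rewrite -ltr_pdivrMr ?exprn_gt0.
have defect_le i : sym_defect (cond mu (S i)) <= (eps / 9) ^+ 3 * N ^+ 2.
  have [_ sym_i] := S_sym i.
  by rewrite -ler_pdivrMr ?exprn_gt0 // mulrC ltW.
exists (mixture_coupling mu S); split; first exact: is_coupling_mixture.
apply: le_lt_trans (cut_estimate_lt N_gt0 N_large heps0 heps1 z_gt).
apply: ler_wpM2l; first by rewrite invr_ge0 ltW.
apply: cut_value_mixture_coupling_le => //; first exact: mulr_gt0.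
by apply/mulr_ge0/sqr_ge0/exprn_ge0/divr_ge0/ler0n/ltW.
Qed.
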